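(* Let $\kappa\in(0,1)$, $\Omega\neq0$ and $0<\delta<2$ be fixed. For $\tau>0$, let $2W=2W(\tau)>0$ be the interface width of the traveling wave with speed $\Omega$, i.e. the unique positive solution of $$\frac{2(1-\kappa)^2}{\tau|\Omega|\delta}+\frac{1-\kappa}{\tau|\Omega|}\,2W=\exp\Big(\frac{1-\kappa}{\kappa\tau|\Omega|}\,2W\Big)-1.$$ Then for all sufficiently small $\tau>0$ the traveling wave is unstable, i.e. the linearized eigenvalue problem $$\tau\lambda\,Z(P)=\tau\Omega\,Z'(P)-Z(P)+\kappa^{-1}\Psi(P)Z(P)-\kappa^{-1}\int_{-\infty}^{\infty}\Psi(Q)Z(Q)\,dQ,\qquad \Psi=\mathbf{1}_{(-W,W)},$$ has an eigenvalue $\lambda$ with $\operatorname{Re}\lambda>0$ (with a bounded eigenfunction).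
   Context: The traveling waves are those of the mean-field particle dynamics $\tau\partial_t x(t,p)=\sigma(t)+\delta(p-\tfrac12)-H'(x(t,p))$, where $H'(x)=x+1$ for $x\le-\kappa$, $H'(x)=-\frac{1-\kappa}{\kappa}x$ for $|x|\le\kappa$, and $H'(x)=x-1$ for $x\ge\kappa$. These waves have the form $x(t,p)=X(p-\Omega t)$ and have a spinodal stripe (values in $(-\kappa,\kappa)$) of width $2W$. An eigenvalue of the linearized problem means a $\lambda\in\mathbb{C}$ admitting a nontrivial continuous $Z:\mathbb{R}\to\mathbb{C}$ of at most linear growth that satisfies the equation away from $P=\pm W$. Instability refers to the existence of such an eigenvalue with positive real part. *)

From Stdlib Require Import Reals.
From Coquelicot Require Import Coquelicot.
Open Scope R_scope.

Definition Psi (W : R) (P : R) : R :=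
  if Rlt_dec (- W) P then (if Rlt_dec P W then 1 else 0) else 0.

Definition width_eq (kappa Omega delta tau W : R) : Prop :=
  2 * (1 - kappa) ^ 2 / (tau * Rabs Omega * delta)
  + (1 - kappa) / (tau * Rabs Omega) * (2 * W)
  = exp ((1 - kappa) / (kappa * tau * Rabs Omega) * (2 * W)) - 1.

(* Z : R -> C solves the linearized eigenvalue equation with eigenvalue lam,
   away from the points P = W and P = -W:
   tau lam Z(P) = tau Omega Z'(P) - Z(P) + kappa^-1 Psi(P) Z(P)
                  - kappa^-1 \int Psi(Q) Z(Q) dQ,
   where \int_R Psi Z = \int_{-W}^{W} Z. *)
Definition solves_eig (kappa Omega tau W : R) (lam : C) (Z : R -> C) : Prop :=
  forall P : R, P <> W -> P <> - W ->
    exists dZ : C, is_derive (K := R_AbsRing) (V := C_R_NormedModule) Z P dZ /\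
      Cmult (RtoC tau) (Cmult lam (Z P)) =
        Cminus
          (Cplus (Cminus (Cmult (RtoC (tau * Omega)) dZ) (Z P))
                 (Cmult (RtoC (/ kappa * Psi W P)) (Z P)))
          (Cmult (RtoC (/ kappa)) (RInt (V := C_R_CompleteNormedModule) Z (- W) W)).

Definition eigenfunction (kappa Omega tau W : R) (lam : C) (Z : R -> C) : Prop :=
  (exists P, Z P <> RtoC 0) /\
  (forall P, continuous Z P) /\
  (exists A B : R, forall P, Cmod (Z P) <= A + B * Rabs P) /\
  solves_eig kappa Omega tau W lam Z.

Definition bounded_fun (Z : R -> C) : Prop :=
  exists M : R, forall P, Cmod (Z P) <= M.

(** For [Omega > 0] and [s = tau * Omega] the eigenfunction is explicit: the constant [-b]
    ahead of the stripe, [-a + exp (b (P - W)) / (kappa s)] inside it and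
    [-b + D exp (a (P + W))] behind it, with [a = b + 1 / (kappa s)], [D] fixed by continuity
    and [lambda = (s b + 1 / kappa - 1) / tau].  The nonlocal term closes up when [b]
    solves the dispersion relation [exp (-2 W b) = 1 - (kappa s b^2 + 2 W b) (1 + kappa s b)],
    and [Re lambda > 0] means [Re b > - (1 - kappa) / (kappa s)].

    Write [L = (1 - kappa) 2 W / (kappa s)] and [b = (w - L) / (2 W)].  The width equation says
    [exp L = 1 + kappa L + c / s] with [c = 2 (1 - kappa)^2 / delta], so [L] is large and
    [s L^2 <= 4 c] when [tau] is small.  In the variable [w] the dispersion relation reads
    [exp (-w) (s + kappa s L + c) = cubic (w / L)], whose constant term dominates:
    [exp (-w) = - delta / 2 + O(1 / L)].  Iterating the principal logarithm is a contraction near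
    [w0 = ln (2 / delta) + i pi], and the root it produces has [0 < Re w < L] because
    [delta < 2], which is exactly the required range of [Re b].  For [Omega < 0] reflect
    [P] to [-P]. *)

From Stdlib Require Import Reals Lra Lia.
From Coquelicot Require Import Coquelicot.
Open Scope R_scope.

(** * Complex exponential and logarithm *)

Lemma C_ext (x y : C) : Re x = Re y -> Im x = Im y -> x = y.
Proof. destruct x, y; simpl; intros; subst; reflexivity. Qed.

Ltac as_C_eq := match goal with |- ?x = ?y => change (@eq C x y) end.

Ltac C_componentwise :=
  repeat match goal with c : C |- _ => destruct c end; apply C_ext; simpl; field.

Definition Cexp (z : C) : C := (exp (Re z) * cos (Im z), exp (Re z) * sin (Im z)).

Lemma Cexp_add (z w : C) : Cexp (z + w)%C = (Cexp z * Cexp w)%C.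
Proof.
  destruct z as [a b], w as [c d]; unfold Cexp; apply C_ext; simpl;
    rewrite exp_plus; [rewrite cos_plus | rewrite sin_plus]; ring.
Qed.

Lemma Cmod_Cexp (z : C) : Cmod (Cexp z) = exp (Re z).
Proof.
  destruct z as [a b]; unfold Cexp, Cmod; cbn [fst snd Re Im].
  replace ((exp a * cos b) ^ 2 + (exp a * sin b) ^ 2) with (exp a ^ 2 * ((sin b)² + (cos b)²))
    by (unfold Rsqr; ring).
  rewrite sin2_cos2, Rmult_1_r, sqrt_pow2; [reflexivity | left; apply exp_pos].
Qed.

Lemma Cexp_R (x : R) : Cexp x = exp x.
Proof. unfold Cexp; simpl. rewrite cos_0, sin_0. apply C_ext; simpl; ring. Qed.

Lemma Cexp_0 : Cexp 0 = 1.
Proof. rewrite Cexp_R, exp_0. reflexivity. Qed.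

Lemma is_derive_pair (f g : R -> R) (x df dg : R) :
  is_derive f x df -> is_derive g x dg ->
  is_derive (V := C_R_NormedModule) (fun t => (f t, g t) : C) x (df, dg).
Proof.
  intros Hf Hg.
  apply (filterdiff_comp_2 (K := R_AbsRing) (V := R_NormedModule) (U := R_NormedModule)
    (W := C_R_NormedModule) f g (fun u v => (u, v)) _ _ (fun u v => (u, v)) Hf Hg).
  apply filterdiff_linear; split.
  - intros [] []; reflexivity.
  - intros k []; reflexivity.
  - exists 1; split; [lra |]. intros []. rewrite Rmult_1_l. apply Rle_refl.
Qed.

Lemma continuous_pair (f g : R -> R) (x : R) :
  continuous f x -> continuous g x -> continuous (fun t => (f t, g t) : C) x.
Proof.
  intros Hf Hg.
  apply (continuous_comp_2 (U := R_UniformSpace) (V := R_UniformSpace) (W := R_UniformSpace)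
    (X := C_UniformSpace) f g (fun u v => (u, v))); auto.
  apply continuous_ext with (f := fun p : R * R => p); [intros []; reflexivity |].
  intros P HP; exact HP.
Qed.

Lemma continuous_C_components (f : R -> C) (x : R) :
  continuous (fun t => Re (f t)) x -> continuous (fun t => Im (f t)) x -> continuous f x.
Proof.
  intros H1 H2. apply (continuous_ext (fun t => (Re (f t), Im (f t)) : C)).
  - intro t. destruct (f t); reflexivity.
  - apply continuous_pair; auto.
Qed.

Lemma continuous_Re (f : R -> C) (x : R) : continuous f x -> continuous (fun t => Re (f t)) x.
Proof.
  intros H. apply (continuous_comp f fst); [exact H | destruct (f x); apply continuous_fst].
Qed.

Lemma continuous_Im (f : R -> C) (x : R) : continuous f x -> continuous (fun t => Im (f t)) x.
Proof.
  intros H. apply (continuous_comp f snd); [exact H | destruct (f x); apply continuous_snd].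
Qed.

Lemma continuous_Cplus (f g : R -> C) (x : R) :
  continuous f x -> continuous g x -> continuous (fun t => f t + g t)%C x.
Proof.
  intros Hf Hg. apply continuous_C_components; simpl.
  - apply (continuous_plus (V := R_NormedModule)); apply continuous_Re; auto.
  - apply (continuous_plus (V := R_NormedModule)); apply continuous_Im; auto.
Qed.

Lemma continuous_Cmult (f g : R -> C) (x : R) :
  continuous f x -> continuous g x -> continuous (fun t => f t * g t)%C x.
Proof.
  intros Hf Hg.
  pose proof (continuous_Re f x Hf); pose proof (continuous_Im f x Hf).
  pose proof (continuous_Re g x Hg); pose proof (continuous_Im g x Hg).
  apply continuous_C_components; simpl.
  - apply (continuous_minus (V := R_NormedModule)); apply (continuous_mult (K := R_AbsRing)); auto.
  - apply (continuous_plus (V := R_NormedModule)); apply (continuous_mult (K := R_AbsRing)); auto.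
Qed.

Lemma Cexp_mult_RtoC (al : C) (u : R) :
  Cexp (al * u)%C = (exp (Re al * u) * cos (Im al * u), exp (Re al * u) * sin (Im al * u)).
Proof.
  destruct al as [p q]; unfold Cexp; cbn [fst snd Re Im Cmult RtoC].
  replace (p * u - q * 0) with (p * u) by ring. replace (p * 0 + q * u) with (q * u) by ring.
  reflexivity.
Qed.

Lemma is_derive_Cexp_affine (al : C) (t0 t : R) :
  is_derive (V := C_R_NormedModule) (fun u => Cexp (al * RtoC (u - t0))%C) t
    (al * Cexp (al * RtoC (t - t0)))%C.
Proof.
  eapply is_derive_ext; [intro u; symmetry; apply Cexp_mult_RtoC |].
  rewrite Cexp_mult_RtoC. destruct al as [p q].
  match goal with
    |- is_derive _ _ ?l => replace l with ((fst l, snd l) : C) by (destruct l; reflexivity)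
  end.
  apply is_derive_pair; auto_derive; auto; cbn; unfold Rminus; ring.
Qed.

Lemma is_derive_Cmult_l (f : R -> C) (c : C) (x : R) (l : C) :
  is_derive (V := C_R_NormedModule) f x l ->
  is_derive (V := C_R_NormedModule) (fun u => c * f u)%C x (c * l)%C.
Proof.
  intros Hf. eapply filterdiff_ext_lin.
  - apply (filterdiff_comp f (fun z : C_R_NormedModule => (c * z)%C : C_R_NormedModule) _
      (fun z : C_R_NormedModule => (c * z)%C : C_R_NormedModule) Hf).
    apply filterdiff_linear; split.
    + intros [] []. destruct c. apply C_ext; simpl; unfold plus; simpl; unfold plus; simpl; ring.
    + intros k []. destruct c. apply C_ext; simpl; unfold scal; simpl; unfold scal, mult; simpl;
        unfold mult; simpl; ring.
    + exists (Cmod c + 1); split; [pose proof (Cmod_ge_0 c); lra |].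
      intros z. change (norm (c * z)%C) with (norm (V := C_R_NormedModule) (c * z)%C).
      rewrite <- !Cmod_norm, Cmod_mult. pose proof (Cmod_ge_0 z). nra.
  - intros y. simpl. rewrite !scal_R_Cmult. ring.
Qed.

Lemma is_derive_Cmult_RtoC (c : C) (u : R) :
  is_derive (V := C_R_NormedModule) (fun t => c * t)%C u c.
Proof.
  assert (Hid : is_derive (V := C_R_NormedModule) (fun t => RtoC t) u (RtoC 1)).
  { apply (is_derive_pair (fun t => t) (fun _ => 0)); auto_derive; auto. }
  pose proof (is_derive_Cmult_l _ c u _ Hid) as H. rewrite Cmult_1_r in H. exact H.
Qed.

Lemma continuous_Cexp_mult_RtoC (al : C) (h : R -> R) (x : R) :
  continuous h x -> continuous (fun t => Cexp (al * h t)%C) x.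
Proof.
  intros Hh. apply (continuous_comp h (fun u => Cexp (al * u)%C)); auto.
  apply (continuous_ext (fun u => Cexp (al * RtoC (u - 0))%C));
    [intro u; rewrite Rminus_0_r; reflexivity |].
  apply (ex_derive_continuous (K := R_AbsRing) (V := C_R_NormedModule)).
  eexists. apply is_derive_Cexp_affine.
Qed.

Lemma Cmod_le_Rabs_Re_Im (z : C) : Cmod z <= Rabs (Re z) + Rabs (Im z).
Proof.
  destruct z as [x y]; unfold Cmod; cbn [fst snd Re Im].
  pose proof (Rabs_pos x) as Hx; pose proof (Rabs_pos y) as Hy.
  rewrite <- (sqrt_Rsqr (Rabs x + Rabs y)) by lra.
  apply sqrt_le_1_alt. unfold Rsqr. rewrite <- (pow2_abs x), <- (pow2_abs y).
  pose proof (Rmult_le_pos _ _ Hx Hy). nra.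
Qed.

Lemma Rabs_Im_le_Cmod (z : C) : Rabs (Im z) <= Cmod z.
Proof.
  destruct z as [x y]. pose proof (Rmax_Cmod (x, y)). pose proof (Rmax_r (Rabs x) (Rabs y)).
  cbn in *. lra.
Qed.

Lemma Cmod_sub_triangle (a b c : C) : Cmod (a - c) <= Cmod (a - b) + Cmod (b - c).
Proof. replace (a - c)%C with ((a - b) + (b - c))%C by ring. apply Cmod_triangle. Qed.

Lemma Cmod_sub_sym (a b : C) : Cmod (a - b) = Cmod (b - a).
Proof. replace (a - b)%C with (- (b - a))%C by ring. apply Cmod_opp. Qed.

Lemma Rabs_Cmod_sub_le (z w : C) : Rabs (Cmod z - Cmod w) <= Cmod (z - w).
Proof.
  pose proof (Cmod_triangle w (z - w)%C) as Hz; pose proof (Cmod_triangle z (w - z)%C) as Hw.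
  replace (w + (z - w))%C with z in Hz by ring. replace (z + (w - z))%C with w in Hw by ring.
  rewrite (Cmod_sub_sym w z) in Hw. apply Rabs_le; lra.
Qed.

(* A logarithm on the half-plane [0 < Re z] only; elsewhere the value is junk. *)
Definition Clog (z : C) : C := (ln (Cmod z), atan (Im z / Re z)).

Lemma Cexp_Clog (z : C) : 0 < Re z -> Cexp (Clog z) = z.
Proof.
  destruct z as [x y]; unfold Clog, Cexp; cbn [fst snd Re Im]; intros Hx.
  assert (Hm2 : Cmod (x, y) ^ 2 = x ^ 2 + y ^ 2) by (rewrite Cmod2_alt; reflexivity).
  assert (Hm : 0 < Cmod (x, y)) by (apply Cmod_gt_0; intro H; injection H; lra).
  assert (Hs : sqrt (1 + (y / x)²) = Cmod (x, y) / x).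
  { rewrite <- (sqrt_Rsqr (Cmod (x, y) / x)) by (apply Rlt_le, Rdiv_lt_0_compat; lra).
    f_equal. unfold Rsqr. field_simplify_eq; [| lra]. simpl in Hm2. lra. }
  rewrite exp_ln, cos_atan, sin_atan, Hs by exact Hm.
  apply C_ext; cbn [fst snd Re Im]; field; lra.
Qed.

Lemma Clog_1 : Clog 1 = 0.
Proof.
  unfold Clog. rewrite Cmod_1, ln_1. cbn [Re Im RtoC fst snd].
  unfold Rdiv. rewrite Rmult_0_l, atan_0. reflexivity.
Qed.

Lemma ln_le_sub_1 (x : R) : 0 < x -> ln x <= x - 1.
Proof. intros Hx. pose proof (exp_ineq1_le (ln x)) as H. rewrite exp_ln in H; lra. Qed.

Lemma exp_le_compat (x y : R) : x <= y -> exp x <= exp y.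
Proof. intros [Hlt | ->]; [left; apply exp_increasing, Hlt | apply Rle_refl]. Qed.

Lemma ln_lipschitz (a b : R) : 1/2 <= a -> 1/2 <= b -> Rabs (ln a - ln b) <= 2 * Rabs (a - b).
Proof.
  intros Ha Hb.
  assert (Hlog : forall u v, 1/2 <= u -> 1/2 <= v -> ln u - ln v <= 2 * Rabs (u - v)).
  { intros u v Hu Hv. rewrite <- ln_div by lra.
    eapply Rle_trans; [apply ln_le_sub_1, Rdiv_lt_0_compat; lra |].
    replace (u / v - 1) with ((u - v) / v) by (field; lra).
    apply Rmult_le_reg_r with v; [lra |]. unfold Rdiv. rewrite Rmult_assoc, Rinv_l by lra.
    pose proof (Rle_abs (u - v)). pose proof (Rabs_pos (u - v)). nra. }
  pose proof (Hlog a b Ha Hb). pose proof (Hlog b a Hb Ha) as Hba. rewrite Rabs_minus_sym in Hba.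
  apply Rabs_le; lra.
Qed.

Lemma atan_lipschitz (a b : R) : Rabs (atan a - atan b) <= Rabs (a - b).
Proof.
  destruct (MVT_gen atan b a (fun x => / (1 + x ^ 2))) as [c [_ Hc]].
  - intros x _. apply is_derive_Reals, derivable_pt_lim_atan.
  - intros x _. apply derivable_continuous_pt. exists (/ (1 + x ^ 2)). apply derivable_pt_lim_atan.
  - rewrite Hc, Rabs_mult.
    assert (0 < / (1 + c ^ 2) <= 1).
    { split; [apply Rinv_0_lt_compat; nra |]. rewrite <- Rinv_1. apply Rinv_le_contravar; nra. }
    rewrite (Rabs_right (/ (1 + c ^ 2))) by lra. pose proof (Rabs_pos (a - b)). nra.
Qed.

Lemma disc_1_half_bounds (z : C) : Cmod (z - 1) <= 1/2 ->
  1/2 <= Re z <= 3/2 /\ Rabs (Im z) <= 1/2 /\ 1/2 <= Cmod z.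
Proof.
  intros Hz.
  pose proof (re_le_Cmod (z - 1)%C) as Hre. pose proof (Rabs_Im_le_Cmod (z - 1)%C) as Him.
  pose proof (re_le_Cmod z). pose proof (Rle_abs (Re z)).
  destruct z as [x y]; cbn in *. rewrite Ropp_0, Rplus_0_r in Him.
  apply Rabs_le_between in Hre. lra.
Qed.

Lemma ratio_lipschitz (x1 y1 x2 y2 c : R) :
  1/2 <= x1 -> 1/2 <= x2 <= 3/2 -> Rabs y2 <= 1/2 ->
  Rabs (x1 - x2) <= c -> Rabs (y1 - y2) <= c -> Rabs (y1 / x1 - y2 / x2) <= 8 * c.
Proof.
  intros Hx1 Hx2 Hy2 Hdx Hdy.
  replace (y1 / x1 - y2 / x2) with (((y1 - y2) * x2 - y2 * (x1 - x2)) / (x1 * x2)) by (field; lra).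
  unfold Rdiv. rewrite Rabs_mult, Rabs_inv, (Rabs_right (x1 * x2)) by nra.
  apply Rmult_le_reg_r with (x1 * x2); [nra |]. rewrite Rmult_assoc, Rinv_l, Rmult_1_r by nra.
  pose proof (Rabs_triang ((y1 - y2) * x2) (- (y2 * (x1 - x2)))) as Htri.
  rewrite Rabs_Ropp, !Rabs_mult, (Rabs_right x2) in Htri by lra.
  pose proof (Rabs_pos (y1 - y2)); pose proof (Rabs_pos (x1 - x2)); pose proof (Rabs_pos y2).
  assert (Rabs (y1 - y2) * x2 <= c * (3/2)) by nra.
  assert (Rabs y2 * Rabs (x1 - x2) <= (1/2) * c) by nra.
  assert (1/4 <= x1 * x2) by nra.
  unfold Rminus at 1. nra.
Qed.

Lemma Clog_lipschitz (z1 z2 : C) : Cmod (z1 - 1) <= 1/2 -> Cmod (z2 - 1) <= 1/2 ->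
  Cmod (Clog z1 - Clog z2) <= 10 * Cmod (z1 - z2).
Proof.
  intros H1 H2.
  destruct (disc_1_half_bounds z1 H1) as [X1 [_ M1]], (disc_1_half_bounds z2 H2) as [X2 [Y2 M2]].
  pose proof (re_le_Cmod (z1 - z2)%C) as Hx. pose proof (Rabs_Im_le_Cmod (z1 - z2)%C) as Hy.
  pose proof (ln_lipschitz _ _ M1 M2) as Hln. pose proof (Rabs_Cmod_sub_le z1 z2).
  eapply Rle_trans; [apply Cmod_le_Rabs_Re_Im |].
  destruct z1 as [x1 y1], z2 as [x2 y2]; unfold Clog; cbn [Re Im fst snd Cminus Cplus Copp] in *.
  pose proof (ratio_lipschitz x1 y1 x2 y2 _ (proj1 X1) X2 Y2 Hx Hy).
  pose proof (atan_lipschitz (y1 / x1) (y2 / x2)).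
  fold (Rminus x1 x2) (Rminus y1 y2) (Rminus (ln (Cmod (x1, y1))) (ln (Cmod (x2, y2))))
    (Rminus (atan (y1 / x1)) (atan (y2 / x2))).
  lra.
Qed.

(** * Contraction mappings of a disc *)

Lemma C_Cauchy_cvg (u : nat -> C) :
  (forall eps, 0 < eps -> exists N, forall n m, (N <= n)%nat -> (N <= m)%nat ->
     Cmod (u m - u n) < eps) ->
  exists l, forall eps, 0 < eps -> exists N, forall n, (N <= n)%nat -> Cmod (u n - l) < eps.
Proof.
  intros Hu.
  assert (Hcomp : forall p : C -> R, (forall z, Rabs (p z) <= Cmod z) ->
            (forall z w, p (z - w)%C = p z - p w) -> Cauchy_crit (fun n => p (u n))).
  { intros p Hp Hlin eps Heps. destruct (Hu eps Heps) as [N HN]. exists N. intros n m Hn Hm.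
    unfold R_dist. rewrite <- Hlin. eapply Rle_lt_trans; [apply Hp | apply HN; auto]. }
  destruct (Rcomplete.R_complete _ (Hcomp Re re_le_Cmod (fun z w => eq_refl))) as [lx Hlx].
  destruct (Rcomplete.R_complete _ (Hcomp Im Rabs_Im_le_Cmod (fun z w => eq_refl))) as [ly Hly].
  exists (lx, ly). intros eps Heps.
  destruct (Hlx (eps / 2) ltac:(lra)) as [N1 H1], (Hly (eps / 2) ltac:(lra)) as [N2 H2].
  exists (N1 + N2)%nat. intros n Hn.
  specialize (H1 n ltac:(lia)). specialize (H2 n ltac:(lia)). unfold R_dist in H1, H2.
  eapply Rle_lt_trans; [apply Cmod_le_Rabs_Re_Im |]. cbn [Re Im Cminus Cplus Copp fst snd].
  unfold Re, Im, Rminus in H1, H2. lra.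
Qed.

Section Contraction.

Variables (F : C -> C) (r q : R).
Hypothesis q_range : 0 <= q < 1.
Hypothesis r_ge0 : 0 <= r.
Hypothesis F_maps_disk : forall v, Cmod v <= r -> Cmod (F v) <= r.
Hypothesis F_lipschitz : forall v1 v2, Cmod v1 <= r -> Cmod v2 <= r ->
  Cmod (F v1 - F v2) <= q * Cmod (v1 - v2).

Let u (n : nat) : C := Nat.iter n F 0.

Let iter_in_disk (n : nat) : Cmod (u n) <= r.
Proof. induction n; simpl; [rewrite Cmod_0; lra | apply F_maps_disk, IHn]. Qed.

Let d := Cmod (u 1 - u 0).

Let iter_step (n : nat) : Cmod (u (S n) - u n) <= q ^ n * d.
Proof.
  induction n; [rewrite pow_O, Rmult_1_l; apply Rle_refl |].
  change (Cmod (F (u (S n)) - F (u n)) <= q * q ^ n * d).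
  eapply Rle_trans; [apply F_lipschitz; apply iter_in_disk |].
  rewrite Rmult_assoc. apply Rmult_le_compat_l; lra.
Qed.

Let iter_dist (n m : nat) : (n <= m)%nat -> Cmod (u m - u n) <= q ^ n * (d / (1 - q)).
Proof.
  intros Hnm. assert (Hd : 0 <= d) by apply Cmod_ge_0.
  assert (Htail : forall k, Cmod (u (n + k)%nat - u n) <= d * (q ^ n - q ^ (n + k)) / (1 - q)).
  { induction k.
    - rewrite Nat.add_0_r, Rminus_diag. replace (u n - u n)%C with (RtoC 0) by ring.
      rewrite Cmod_0. unfold Rdiv. rewrite Rmult_0_r, Rmult_0_l. lra.
    - eapply Rle_trans; [apply (Cmod_sub_triangle _ (u (n + k)%nat)) |].
      replace (n + S k)%nat with (S (n + k)) by lia.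
      pose proof (iter_step (n + k)).
      replace (d * (q ^ n - q ^ S (n + k)) / (1 - q))
        with (d * (q ^ n - q ^ (n + k)) / (1 - q) + q ^ (n + k) * d) by (simpl; field; lra).
      lra. }
  replace m with (n + (m - n))%nat by lia.
  eapply Rle_trans; [apply Htail |].
  pose proof (pow_le q (n + (m - n)) ltac:(lra)).
  unfold Rdiv. rewrite <- Rmult_assoc.
  apply Rmult_le_compat_r; [left; apply Rinv_0_lt_compat; lra | nra].
Qed.

Let iter_Cauchy (eps : R) : 0 < eps -> exists N, forall n m, (N <= n)%nat -> (N <= m)%nat ->
  Cmod (u m - u n) < eps.
Proof.
  intros Heps. assert (HC : 0 <= d / (1 - q)) by (apply Rdiv_le_0_compat; [apply Cmod_ge_0 | lra]).
  destruct (pow_lt_1_zero q ltac:(rewrite Rabs_right; lra) (eps / (d / (1 - q) + 1)))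
    as [N HN]; [apply Rdiv_lt_0_compat; lra |].
  assert (Hsmall : forall k, (N <= k)%nat -> q ^ k * (d / (1 - q)) < eps).
  { intros k Hk. specialize (HN k Hk). rewrite Rabs_right in HN by (apply Rle_ge, pow_le; lra).
    apply Rmult_lt_compat_r with (r := d / (1 - q) + 1) in HN; [| lra].
    unfold Rdiv at 2 in HN. rewrite Rmult_assoc, Rinv_l in HN by lra.
    pose proof (pow_le q k ltac:(lra)). nra. }
  exists N. intros n m Hn Hm. destruct (Nat.le_ge_cases n m) as [Hnm | Hnm].
  - eapply Rle_lt_trans; [apply iter_dist | apply Hsmall]; auto.
  - rewrite Cmod_sub_sym. eapply Rle_lt_trans; [apply iter_dist | apply Hsmall]; auto.
Qed.

Lemma contraction_fixpoint : exists v, Cmod v <= r /\ F v = v.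
Proof.
  destruct (C_Cauchy_cvg u iter_Cauchy) as [v Hv].
  assert (Hvr : Cmod v <= r).
  { apply le_epsilon. intros eps Heps. destruct (Hv eps Heps) as [N HN].
    pose proof (Cmod_sub_triangle v (u N) 0) as Htri. rewrite (Cmod_sub_sym v (u N)) in Htri.
    specialize (HN N (le_n N)). pose proof (iter_in_disk N).
    replace (v - 0)%C with v in Htri by ring. replace (u N - 0)%C with (u N) in Htri by ring. lra. }
  exists v. split; [exact Hvr |].
  apply Ceq_minus, Cmod_eq_0, Rle_antisym; [| apply Cmod_ge_0].
  apply le_epsilon. intros eps Heps. rewrite Rplus_0_l.
  destruct (Hv (eps / 2) ltac:(lra)) as [N HN].
  pose proof (Cmod_sub_triangle (F v) (u (S N)) v).
  pose proof (F_lipschitz v (u N) Hvr (iter_in_disk N)).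
  pose proof (HN N (le_n N)). pose proof (HN (S N) (le_S _ _ (le_n N))).
  rewrite (Cmod_sub_sym v (u N)) in *. change (u (S N)) with (F (u N)) in *.
  pose proof (Cmod_ge_0 (u N - v)%C). nra.
Qed.

End Contraction.

(** * The explicit eigenfunction *)

Lemma Rmin_Rabs (x y : R) : Rmin x y = (x + y - Rabs (x - y)) / 2.
Proof.
  unfold Rmin; destruct (Rle_dec x y); [rewrite Rabs_left1 | rewrite Rabs_right]; lra.
Qed.

Lemma continuous_Rmin (f g : R -> R) (x : R) :
  continuous f x -> continuous g x -> continuous (fun t => Rmin (f t) (g t)) x.
Proof.
  intros Hf Hg.
  apply (continuous_ext (fun t => (f t + g t - Rabs (f t - g t)) * / 2));
    [intro t; rewrite Rmin_Rabs; reflexivity |].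
  apply (continuous_mult (K := R_AbsRing)); [| apply continuous_const].
  apply (continuous_minus (V := R_NormedModule));
    [apply (continuous_plus (V := R_NormedModule)); auto |].
  apply continuous_Rabs_comp, (continuous_minus (V := R_NormedModule)); auto.
Qed.

Lemma continuous_Rmax (f g : R -> R) (x : R) :
  continuous f x -> continuous g x -> continuous (fun t => Rmax (f t) (g t)) x.
Proof.
  intros Hf Hg.
  apply (continuous_ext (fun t => - Rmin (- f t) (- g t)));
    [intro t; rewrite Ropp_Rmin, !Ropp_involutive; reflexivity |].
  apply (continuous_opp (V := R_NormedModule)), continuous_Rmin;
    apply (continuous_opp (V := R_NormedModule)); auto.
Qed.

Definition clamp (W P : R) : R := Rmax (- W) (Rmin P W).

Definition stripe_rate (k s : R) (b : C) : C := (b + RtoC (/ (k * s)))%C.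

Definition stripe_profile (k s W : R) (b : C) (u : R) : C :=
  (- stripe_rate k s b + RtoC (/ (k * s)) * Cexp (b * RtoC (u - W)))%C.

(* One continuous formula for the three pieces: [-b] for [W <= P], [stripe_profile] on
   [[-W, W]], and relaxation to [-b] at rate [stripe_rate] for [P <= -W]. *)
Definition wave_eigenfunction (k s W : R) (b : C) (P : R) : C :=
  (- b + (stripe_profile k s W b (clamp W P) + b)
           * Cexp (stripe_rate k s b * RtoC (Rmin 0 (P + W))))%C.

Lemma stripe_profile_W (k s W : R) (b : C) : k * s <> 0 -> stripe_profile k s W b W = (- b)%C.
Proof.
  intros H. unfold stripe_profile, stripe_rate. rewrite Rminus_diag, Cmult_0_r, Cexp_0.
  rewrite RtoC_inv by exact H. field. intro E. apply H. now injection E.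
Qed.

Lemma wave_eigenfunction_stripe (k s W : R) (b : C) (P : R) : -W <= P <= W ->
  wave_eigenfunction k s W b P = stripe_profile k s W b P.
Proof.
  intros HP. unfold wave_eigenfunction, clamp.
  rewrite (Rmin_left P W), (Rmax_right (- W) P), (Rmin_left 0 (P + W)), Cmult_0_r, Cexp_0
    by lra.
  ring.
Qed.

Lemma wave_eigenfunction_right (k s W : R) (b : C) (P : R) : 0 < W -> k * s <> 0 -> W <= P ->
  wave_eigenfunction k s W b P = (- b)%C.
Proof.
  intros HW Hks HP. unfold wave_eigenfunction, clamp.
  rewrite (Rmin_right P W), (Rmax_right (- W) W), (Rmin_left 0 (P + W)), Cmult_0_r, Cexp_0,
    stripe_profile_W by lra.
  ring.
Qed.

Lemma wave_eigenfunction_left (k s W : R) (b : C) (P : R) : 0 < W -> P <= -W ->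
  wave_eigenfunction k s W b P =
  (- b + (stripe_profile k s W b (- W) + b) * Cexp (stripe_rate k s b * RtoC (P - - W)))%C.
Proof.
  intros HW HP. unfold wave_eigenfunction, clamp.
  rewrite (Rmin_left P W), (Rmax_left (- W) P), (Rmin_right 0 (P + W)) by lra.
  replace (P - - W) with (P + W) by ring. reflexivity.
Qed.

Lemma is_derive_stripe_profile (k s W : R) (b : C) (u : R) :
  is_derive (V := C_R_NormedModule) (stripe_profile k s W b) u
    (RtoC (/ (k * s)) * (b * Cexp (b * RtoC (u - W))))%C.
Proof.
  rewrite <- (Cplus_0_l (RtoC (/ (k * s)) * _)).
  apply (is_derive_plus (V := C_R_NormedModule) (fun _ => - stripe_rate k s b)%C).
  - apply (is_derive_const (V := C_R_NormedModule)).
  - apply is_derive_Cmult_l, is_derive_Cexp_affine.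
Qed.

Lemma continuous_stripe_profile (k s W : R) (b : C) (u : R) : continuous (stripe_profile k s W b) u.
Proof.
  apply (ex_derive_continuous (V := C_R_NormedModule)). eexists. apply is_derive_stripe_profile.
Qed.

Lemma continuous_wave_eigenfunction (k s W : R) (b : C) (P : R) :
  continuous (wave_eigenfunction k s W b) P.
Proof.
  unfold wave_eigenfunction. apply continuous_Cplus; [apply continuous_const |].
  apply continuous_Cmult.
  - apply continuous_Cplus; [| apply continuous_const].
    apply (continuous_comp (clamp W) (stripe_profile k s W b)); [| apply continuous_stripe_profile].
    apply continuous_Rmax; [apply continuous_const |].
    apply continuous_Rmin; [apply continuous_id | apply continuous_const].
  - apply continuous_Cexp_mult_RtoC, continuous_Rmin; [apply continuous_const |].
    apply (continuous_plus (V := R_NormedModule)); [apply continuous_id | apply continuous_const].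
Qed.

Definition wave_eigenvalue (k tau s : R) (b : C) : C :=
  (RtoC (/ tau) * (RtoC s * b + RtoC (/ k - 1)))%C.

Lemma Re_wave_eigenvalue_pos (k tau s : R) (b : C) : 0 < k < 1 -> 0 < tau -> 0 < s ->
  - (1 - k) / (k * s) < Re b -> 0 < Re (wave_eigenvalue k tau s b).
Proof.
  intros Hk Htau Hs Hb. unfold wave_eigenvalue.
  rewrite re_scal_l. cbn [Re Cplus Cmult RtoC fst snd].
  apply Rmult_lt_0_compat; [apply Rinv_0_lt_compat; lra |].
  apply Rmult_lt_compat_l with (r := s) in Hb; [| lra].
  replace (s * (- (1 - k) / (k * s))) with (1 - / k) in Hb by (field; lra).
  change (fst b) with (Re b). lra.
Qed.

Lemma wave_eigenfunction_bounded (k s W : R) (b : C) :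
  0 < W -> 0 < k * s -> 0 < Re (stripe_rate k s b) ->
  exists M, forall P, Cmod (wave_eigenfunction k s W b P) <= M.
Proof.
  intros HW Hks Ha.
  set (a := stripe_rate k s b) in *.
  set (M := Cmod a + / (k * s) * exp (Rabs (Re b) * (2 * W)) + Cmod b).
  assert (Hinv : 0 < / (k * s)) by (apply Rinv_0_lt_compat; lra).
  assert (Hprof : forall u, - W <= u <= W -> Cmod (stripe_profile k s W b u + b) <= M).
  { intros u Hu. unfold stripe_profile, M. fold a.
    eapply Rle_trans; [apply Cmod_triangle |]. apply Rplus_le_compat_r.
    eapply Rle_trans; [apply Cmod_triangle |].
    rewrite Cmod_opp, Cmod_mult, Cmod_R, Cmod_Cexp, re_scal_r, Rabs_right by lra.
    apply Rplus_le_compat_l, Rmult_le_compat_l, exp_le_compat; [lra |].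
    pose proof (Rle_abs (- Re b)) as Hneg. rewrite Rabs_Ropp in Hneg.
    pose proof (Rle_abs (Re b)). pose proof (Rabs_pos (Re b)). nra. }
  exists (Cmod b + M). intros P. unfold wave_eigenfunction. fold a.
  eapply Rle_trans; [apply Cmod_triangle |].
  rewrite Cmod_opp, Cmod_mult, Cmod_Cexp, re_scal_r. apply Rplus_le_compat_l.
  assert (Hexp : exp (Re a * Rmin 0 (P + W)) <= 1).
  { rewrite <- exp_0. apply exp_le_compat. pose proof (Rmin_l 0 (P + W)). nra. }
  assert (Hc : - W <= clamp W P <= W)
    by (unfold clamp; split; [apply Rmax_l | apply Rmax_lub; [lra | apply Rmin_r]]).
  pose proof (Hprof _ Hc). pose proof (exp_pos (Re a * Rmin 0 (P + W))).
  pose proof (Cmod_ge_0 (stripe_profile k s W b (clamp W P) + b)). nra.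
Qed.

Lemma RInt_stripe_profile (k s W : R) (b : C) : 0 < W -> b <> 0 ->
  RInt (V := C_R_CompleteNormedModule) (stripe_profile k s W b) (- W) W =
  (RtoC (- (2 * W)) * stripe_rate k s b
   + RtoC (/ (k * s)) / b * (1 - Cexp (b * RtoC (- W - W))))%C.
Proof.
  intros HW Hb.
  set (G := fun u : R => (- stripe_rate k s b * RtoC u
                          + RtoC (/ (k * s)) / b * Cexp (b * RtoC (u - W)))%C).
  assert (HG : forall u, is_derive (V := C_R_NormedModule) G u (stripe_profile k s W b u)).
  { intros u. unfold stripe_profile.
    replace (- stripe_rate k s b + RtoC (/ (k * s)) * Cexp (b * RtoC (u - W)))%C
      with (plus (- stripe_rate k s b)%C
              (RtoC (/ (k * s)) / b * (b * Cexp (b * RtoC (u - W))))%C)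
      by (unfold plus; simpl; field; exact Hb).
    apply (is_derive_plus (V := C_R_NormedModule)).
    - apply is_derive_Cmult_RtoC.
    - apply is_derive_Cmult_l, is_derive_Cexp_affine. }
  apply is_RInt_unique.
  replace (RtoC (- (2 * W)) * stripe_rate k s b
           + RtoC (/ (k * s)) / b * (1 - Cexp (b * RtoC (- W - W))))%C
    with (minus (G W) (G (- W)) : C_R_CompleteNormedModule).
  - apply (is_RInt_derive (V := C_R_CompleteNormedModule)); intros u _;
      [apply HG | apply continuous_stripe_profile].
  - unfold G. rewrite Rminus_diag, Cmult_0_r, Cexp_0. change minus with Cminus.
    replace (RtoC (- (2 * W))) with (- (RtoC W + RtoC W))%C by (apply C_ext; simpl; ring).
    replace (RtoC (- W)) with (- RtoC W)%C by (apply C_ext; simpl; ring).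
    as_C_eq. field. exact Hb.
Qed.

Lemma eigen_identity_right (k tau Om : R) (b : C) : k <> 0 -> tau <> 0 -> Om <> 0 ->
  (RtoC tau * (wave_eigenvalue k tau (tau * Om) b * - b))%C =
  (RtoC (tau * Om) * 0 - - b + RtoC (/ k * 0) * - b
   - RtoC (/ k) * (b * (1 + RtoC (k * (tau * Om)) * b)))%C.
Proof. intros. unfold wave_eigenvalue. C_componentwise; auto. Qed.

Lemma eigen_identity_stripe (k tau Om : R) (b e : C) : k <> 0 -> tau <> 0 -> Om <> 0 ->
  (RtoC tau * (wave_eigenvalue k tau (tau * Om) b
     * (- stripe_rate k (tau * Om) b + RtoC (/ (k * (tau * Om))) * e)))%C =
  (RtoC (tau * Om) * (RtoC (/ (k * (tau * Om))) * (b * e))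
   - (- stripe_rate k (tau * Om) b + RtoC (/ (k * (tau * Om))) * e)
   + RtoC (/ k * 1) * (- stripe_rate k (tau * Om) b + RtoC (/ (k * (tau * Om))) * e)
   - RtoC (/ k) * (b * (1 + RtoC (k * (tau * Om)) * b)))%C.
Proof. intros. unfold wave_eigenvalue, stripe_rate. C_componentwise; auto. Qed.

Lemma eigen_identity_left (k tau Om : R) (b D e : C) : k <> 0 -> tau <> 0 -> Om <> 0 ->
  (RtoC tau * (wave_eigenvalue k tau (tau * Om) b * (- b + D * e)))%C =
  (RtoC (tau * Om) * (D * (stripe_rate k (tau * Om) b * e)) - (- b + D * e)
   + RtoC (/ k * 0) * (- b + D * e) - RtoC (/ k) * (b * (1 + RtoC (k * (tau * Om)) * b)))%C.
Proof. intros. unfold wave_eigenvalue, stripe_rate. C_componentwise; auto. Qed.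

Lemma Psi_in (W P : R) : - W < P < W -> Psi W P = 1.
Proof. intros HP. unfold Psi. destruct (Rlt_dec (- W) P); [destruct (Rlt_dec P W) |]; lra. Qed.

Lemma Psi_out (W P : R) : ~ (- W < P < W) -> Psi W P = 0.
Proof. intros HP. unfold Psi. destruct (Rlt_dec (- W) P); [destruct (Rlt_dec P W) |]; lra. Qed.

Definition wave_dispersion (k s W : R) (b : C) : C :=
  (1 - (RtoC (k * s) * (b * b) + RtoC (2 * W) * b) * (1 + RtoC (k * s) * b))%C.

Section Wave_eigenpair.

Variables (k tau Om W : R) (b : C).
Hypothesis k_range : 0 < k < 1.
Hypothesis tau_pos : 0 < tau.
Hypothesis Om_pos : 0 < Om.
Hypothesis W_pos : 0 < W.
Hypothesis Re_b_range : - (1 - k) / (k * (tau * Om)) < Re b < 0.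
Hypothesis b_dispersion : Cexp (b * RtoC (- W - W)) = wave_dispersion k (tau * Om) W b.

Let s := tau * Om.
Let Z := wave_eigenfunction k s W b.

Let s_pos : 0 < s.
Proof. unfold s; nra. Qed.

Let ks_pos : 0 < k * s.
Proof. apply Rmult_lt_0_compat; lra. Qed.

Let b_neq0 : b <> 0%C.
Proof. intros E. rewrite E in Re_b_range. simpl in Re_b_range. lra. Qed.

Let Re_stripe_rate_pos : 0 < Re (stripe_rate k s b).
Proof.
  unfold stripe_rate. cbn [Re Cplus RtoC fst]. change (fst b) with (Re b).
  replace (- (1 - k) / (k * s)) with (/ (k * s) * k - / (k * s)) in Re_b_range by (field; nra).
  assert (0 < / (k * s) * k) by (apply Rmult_lt_0_compat; [apply Rinv_0_lt_compat; nra | lra]).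
  fold s in Re_b_range. lra.
Qed.

Let RInt_Z : RInt (V := C_R_CompleteNormedModule) Z (- W) W = (b * (1 + RtoC (k * s) * b))%C.
Proof.
  rewrite (RInt_ext (V := C_R_CompleteNormedModule) _ (stripe_profile k s W b)).
  2:{ intros x Hx. rewrite Rmin_left, Rmax_right in Hx by lra.
      apply wave_eigenfunction_stripe; lra. }
  rewrite RInt_stripe_profile, b_dispersion by auto.
  unfold wave_dispersion, stripe_rate. fold s.
  assert (k * s <> 0) by nra.
  rewrite RtoC_inv, !RtoC_opp, !RtoC_mult by auto.
  as_C_eq.
  field. repeat split; try exact b_neq0; intros E; injection E; lra.
Qed.

Let k_neq0 : k <> 0. Proof. lra. Qed.
Let tau_neq0 : tau <> 0. Proof. lra. Qed.
Let Om_neq0 : Om <> 0. Proof. lra. Qed.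

Let solves_at (P : R) : Prop :=
  exists dZ : C, is_derive (V := C_R_NormedModule) Z P dZ /\
    (RtoC tau * (wave_eigenvalue k tau s b * Z P))%C =
    (RtoC (tau * Om) * dZ - Z P + RtoC (/ k * Psi W P) * Z P
     - RtoC (/ k) * RInt (V := C_R_CompleteNormedModule) Z (- W) W)%C.

Let solves_right (P : R) : W < P -> solves_at P.
Proof.
  intros HP. unfold solves_at. rewrite RInt_Z. exists 0%C. split.
  - apply (is_derive_ext_loc (V := C_R_NormedModule) (fun _ => (- b)%C)).
    + apply (filter_imp (fun t => W < t)); [| now apply open_gt].
      intros t Ht. symmetry. apply wave_eigenfunction_right; nra.
    + apply (is_derive_const (V := C_R_NormedModule)).
  - unfold Z. rewrite wave_eigenfunction_right, Psi_out by nra. now apply eigen_identity_right.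
Qed.

Let solves_stripe (P : R) : - W < P < W -> solves_at P.
Proof.
  intros HP. unfold solves_at. rewrite RInt_Z.
  exists (RtoC (/ (k * s)) * (b * Cexp (b * RtoC (P - W))))%C. split.
  - apply (is_derive_ext_loc (V := C_R_NormedModule) (stripe_profile k s W b)).
    + apply (filter_imp (fun t => - W < t /\ t < W));
        [| apply open_and; [apply open_gt | apply open_lt | exact HP]].
      intros t Ht. symmetry. apply wave_eigenfunction_stripe; lra.
    + apply is_derive_stripe_profile.
  - unfold Z. rewrite wave_eigenfunction_stripe, Psi_in by lra. now apply eigen_identity_stripe.
Qed.

Let solves_left (P : R) : P < - W -> solves_at P.
Proof.
  intros HP. unfold solves_at. rewrite RInt_Z.
  set (D := (stripe_profile k s W b (- W) + b)%C). set (a := stripe_rate k s b).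
  exists (D * (a * Cexp (a * RtoC (P - - W))))%C. split.
  - apply (is_derive_ext_loc (V := C_R_NormedModule)
             (fun t => - b + D * Cexp (a * RtoC (t - - W)))%C).
    + apply (filter_imp (fun t => t < - W)); [| now apply open_lt].
      intros t Ht. symmetry. apply wave_eigenfunction_left; lra.
    + rewrite <- (Cplus_0_l (D * _)).
      apply (is_derive_plus (V := C_R_NormedModule) (fun _ => - b)%C);
        [apply (is_derive_const (V := C_R_NormedModule)) |].
      apply is_derive_Cmult_l, is_derive_Cexp_affine.
  - unfold Z. rewrite wave_eigenfunction_left, Psi_out by lra. now apply eigen_identity_left.
Qed.

Let solves : solves_eig k Om tau W (wave_eigenvalue k tau s b) Z.
Proof.
  intros P HPW HPmW.
  destruct (Rtotal_order P (- W)) as [Hl | [-> | Hm]]; [now apply solves_left | congruence |].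
  destruct (Rtotal_order P W) as [Hs | [-> | Hr]]; [apply solves_stripe; lra | congruence |].
  now apply solves_right.
Qed.

Lemma wave_eigenpair :
  eigenfunction k Om tau W (wave_eigenvalue k tau (tau * Om) b)
    (wave_eigenfunction k (tau * Om) W b)
  /\ bounded_fun (wave_eigenfunction k (tau * Om) W b).
Proof.
  destruct (wave_eigenfunction_bounded k s W b W_pos ks_pos Re_stripe_rate_pos)
    as [M HM].
  split; [| now exists M].
  split; [| split; [| split]].
  - exists W. rewrite wave_eigenfunction_right by (first [exact (Rgt_not_eq _ _ ks_pos) | lra]).
    intro E. apply b_neq0.
    replace b with (- - b)%C by ring. rewrite E. ring.
  - intros P. apply continuous_wave_eigenfunction.
  - exists M, 0. intros P. rewrite Rmult_0_l, Rplus_0_r. apply HM.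
  - exact solves.
Qed.

End Wave_eigenpair.

Lemma Psi_opp (W P : R) : Psi W (- P) = Psi W P.
Proof.
  destruct (Rlt_dec (- W) P), (Rlt_dec P W); [rewrite !Psi_in | rewrite !Psi_out ..]; lra.
Qed.

Lemma RInt_comp_opp_sym (Z : R -> C) (W : R) : (forall P, continuous Z P) ->
  RInt (V := C_R_CompleteNormedModule) (fun P => Z (- P)) (- W) W =
  RInt (V := C_R_CompleteNormedModule) Z (- W) W.
Proof.
  intros Hc.
  assert (Hex : ex_RInt (V := C_R_CompleteNormedModule) Z (- W) W)
    by (apply ex_RInt_continuous; intros; apply Hc).
  pose proof (RInt_correct _ _ _ Hex) as H.
  apply (is_RInt_opp (V := C_R_CompleteNormedModule)) in H.
  rewrite <- (Ropp_involutive W) in H at 2.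
  apply (is_RInt_comp_opp (V := C_R_CompleteNormedModule)), is_RInt_swap in H.
  rewrite !opp_opp in H.
  apply is_RInt_unique. eapply is_RInt_ext; [| exact H].
  intros x _. simpl. rewrite opp_opp. reflexivity.
Qed.

Lemma solves_eig_reflect (k Om tau W : R) (lam : C) (Z : R -> C) :
  (forall P, continuous Z P) -> solves_eig k Om tau W lam Z ->
  solves_eig k (- Om) tau W lam (fun P => Z (- P)).
Proof.
  intros Hc Hs P H1 H2.
  destruct (Hs (- P) ltac:(lra) ltac:(lra)) as [dZ [HdZ Heq]].
  exists (- dZ)%C. split.
  - replace (- dZ)%C with (scal (-1) dZ : C_R_NormedModule)
      by (rewrite scal_R_Cmult; as_C_eq; ring).
    apply (is_derive_comp (V := C_R_NormedModule) Z Ropp P dZ (-1)); [exact HdZ |].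
    apply (is_derive_ext (V := R_NormedModule) (fun x => - x)); [reflexivity |].
    auto_derive; auto.
  - rewrite RInt_comp_opp_sym, <- Psi_opp by exact Hc. rewrite Heq.
    rewrite RtoC_mult, (RtoC_mult tau (- Om)), RtoC_opp. ring.
Qed.

Lemma eigenfunction_reflect (k Om tau W : R) (lam : C) (Z : R -> C) :
  eigenfunction k Om tau W lam Z -> bounded_fun Z ->
  eigenfunction k (- Om) tau W lam (fun P => Z (- P)) /\ bounded_fun (fun P => Z (- P)).
Proof.
  intros [[P0 HP0] [Hc [[A [B HAB]] Hs]]] [M HM].
  split; [| exists M; intros; apply HM].
  split; [| split; [| split]].
  - exists (- P0). rewrite Ropp_involutive. exact HP0.
  - intros P. apply (continuous_comp Ropp Z); [| apply Hc].
    apply (continuous_opp (V := R_NormedModule)), continuous_id.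
  - exists A, B. intros P. rewrite <- (Rabs_Ropp P). apply HAB.
  - now apply solves_eig_reflect.
Qed.

(** * Roots of the dispersion relation *)

Definition cubic (a0 a1 a2 a3 : R) (t : C) : C :=
  (a0 + a1 * t + a2 * (t * t) + a3 * (t * (t * t)))%C.

Lemma cubic_bound (a0 a1 a2 a3 : R) (t : C) : Cmod t <= 1 ->
  Cmod (cubic a0 a1 a2 a3 t) <= Rabs a0 + (Rabs a1 + Rabs a2 + Rabs a3) * Cmod t.
Proof.
  intros Ht. unfold cubic. pose proof (Cmod_ge_0 t).
  pose proof (Cmod_triangle (a0 + a1 * t + a2 * (t * t))%C (a3 * (t * (t * t)))%C).
  pose proof (Cmod_triangle (a0 + a1 * t)%C (a2 * (t * t))%C).
  pose proof (Cmod_triangle a0 (a1 * t)%C).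
  rewrite !Cmod_mult, !Cmod_R in *.
  pose proof (Rabs_pos a1); pose proof (Rabs_pos a2); pose proof (Rabs_pos a3).
  assert (Cmod t * Cmod t <= Cmod t) by nra.
  assert (Cmod t * (Cmod t * Cmod t) <= Cmod t) by nra.
  nra.
Qed.

Lemma cubic_lipschitz (a0 a1 a2 a3 : R) (t1 t2 : C) : Cmod t1 <= 1 -> Cmod t2 <= 1 ->
  Cmod (cubic a0 a1 a2 a3 t1 - cubic a0 a1 a2 a3 t2) <=
  3 * (Rabs a1 + Rabs a2 + Rabs a3) * Cmod (t1 - t2).
Proof.
  intros H1 H2.
  replace (cubic a0 a1 a2 a3 t1 - cubic a0 a1 a2 a3 t2)%C
    with ((t1 - t2) * (a1 + a2 * (t1 + t2) + a3 * (t1 * t1 + t1 * t2 + t2 * t2)))%C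
    by (unfold cubic; ring).
  rewrite Cmod_mult, Rmult_comm. apply Rmult_le_compat_r; [apply Cmod_ge_0 |].
  pose proof (Cmod_ge_0 t1); pose proof (Cmod_ge_0 t2).
  pose proof (Cmod_triangle (a1 + a2 * (t1 + t2))%C (a3 * (t1 * t1 + t1 * t2 + t2 * t2))%C).
  pose proof (Cmod_triangle a1 (a2 * (t1 + t2))%C).
  pose proof (Cmod_triangle t1 t2).
  pose proof (Cmod_triangle (t1 * t1 + t1 * t2)%C (t2 * t2)%C).
  pose proof (Cmod_triangle (t1 * t1)%C (t1 * t2)%C).
  rewrite !Cmod_mult, !Cmod_R in *.
  pose proof (Rabs_pos a1); pose proof (Rabs_pos a2); pose proof (Rabs_pos a3).
  pose proof (Cmod_ge_0 (t1 + t2)%C).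
  pose proof (Cmod_ge_0 (t1 * t1 + t1 * t2 + t2 * t2)%C).
  assert (Cmod (t1 * t1 + t1 * t2 + t2 * t2) <= 3) by nra.
  nra.
Qed.

(* [s * wave_dispersion k s W b] written in [t = w / L], where [b = (w - L) / (2 W)] and
   [2 W = k s L / (1 - k)]; see [scaled_dispersion_wave]. *)
Definition scaled_dispersion (k s L : R) (t : C) : C :=
  (RtoC s - (RtoC k + RtoC (1 - k) * t) * (1 - t)
     * (RtoC ((1 - k) ^ 2 / k) * (1 - t) - RtoC (s * L)))%C.

Definition disp_coef0 (k d s L : R) := - (2 / d + 1) * s - k * (s * L) - 2 / d * k * (s * L).
Definition disp_coef1 (k d s L : R) :=
  2 / d * ((1 - k) ^ 2 / k) * (1 - 3 * k) - 2 / d * (s * L) * (1 - 2 * k).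
Definition disp_coef2 (k d s L : R) :=
  2 / d * ((1 - k) ^ 2 / k) * (3 * k - 2) + 2 / d * (s * L) * (1 - k).
Definition disp_coef3 (k d : R) := 2 / d * ((1 - k) ^ 2 / k) * (1 - k).

Lemma scaled_dispersion_cubic (k d s L : R) (t : C) : k <> 0 -> d <> 0 ->
  scaled_dispersion k s L t =
  (RtoC (- (d / 2)) * (RtoC (s + k * (s * L) + 2 * (1 - k) ^ 2 / d)
     + cubic (disp_coef0 k d s L) (disp_coef1 k d s L) (disp_coef2 k d s L) (disp_coef3 k d) t))%C.
Proof.
  intros Hk Hd. destruct t as [t1 t2].
  unfold scaled_dispersion, cubic, disp_coef0, disp_coef1, disp_coef2, disp_coef3.
  apply C_ext; simpl; field; auto.
Qed.

Lemma Cexp_neg_ln_PI (d : R) : 0 < d -> Cexp (- (ln (2 / d), PI))%C = RtoC (- (d / 2)).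
Proof.
  intros Hd. unfold Cexp; simpl.
  rewrite cos_neg, sin_neg, cos_PI, sin_PI, exp_Ropp, exp_ln by (apply Rdiv_lt_0_compat; lra).
  apply C_ext; simpl; field; lra.
Qed.

Section Dispersion_root.

Variables (k d s L : R).
Hypothesis k_range : 0 < k < 1.
Hypothesis d_range : 0 < d < 2.
Hypothesis s_pos : 0 < s.

(* The fixed point is sought in the disc of radius [r] around [w0], on which [Cmod (w0 + v)]
   is at most [T]; the lower bounds on [L] make the perturbation [rho] smaller than [r / 10]
   and [1/20]-Lipschitz there, against the Lipschitz constant [10] of [Clog]. *)
Let A := 2 / d.
Let c0 := 2 * (1 - k) ^ 2 / d.
Let T := ln A + PI + 1.
Let r := Rmin 1 (ln A / 2).
Let K := 8 * A + 8 + 6 * T / k.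

Hypothesis sLL_bound : s * L * L <= 4 * c0.
Hypothesis L_ge_A : 8 * A <= L.
Hypothesis L_ge_T : T <= L.
Hypothesis L_ge_K : 10 * K <= r * L.
Hypothesis L_ge_k : 360 <= k * L.

Let sE := s + k * (s * L) + c0.
Let a0 := disp_coef0 k d s L.
Let a1 := disp_coef1 k d s L.
Let a2 := disp_coef2 k d s L.
Let a3 := disp_coef3 k d.

Let A_gt_1 : 1 < A.
Proof. unfold A. apply Rlt_div_r; lra. Qed.

Let c0_pos : 0 < c0.
Proof.
  unfold c0. apply Rdiv_lt_0_compat; [apply Rmult_lt_0_compat; [lra | apply pow_lt] |]; lra.
Qed.

Let lnA_pos : 0 < ln A.
Proof. rewrite <- ln_1. apply ln_increasing; lra. Qed.

Let r_range : 0 < r /\ r <= 1 /\ r <= ln A / 2.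
Proof. unfold r. repeat split; [apply Rmin_glb_lt; lra | apply Rmin_l | apply Rmin_r]. Qed.

Let L_pos : 0 < L.
Proof. lra. Qed.

Let Rabs_inv_L : Rabs (/ L) = / L.
Proof. apply Rabs_pos_eq, Rlt_le, Rinv_0_lt_compat, L_pos. Qed.

Let sE_ge_c0 : c0 <= sE.
Proof. unfold sE. pose proof (Rmult_lt_0_compat s L s_pos L_pos). nra. Qed.

Let Rabs_inv_sE : Rabs (/ sE) = / sE.
Proof. apply Rabs_pos_eq, Rlt_le, Rinv_0_lt_compat. lra. Qed.

Let coef0_bound : Rabs a0 <= (8 * A + 8) * c0 / L.
Proof.
  unfold a0, disp_coef0. fold A.
  set (S := s * L) in *.
  assert (0 < S) by (unfold S; nra).
  assert (s <= S) by (unfold S; pose proof A_gt_1; nra).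
  assert ((2 * A + 2) * S * L <= (8 * A + 8) * c0) by nra.
  assert ((2 * A + 2) * S <= (8 * A + 8) * c0 / L)
    by (apply Rle_div_r with (a := (2 * A + 2) * S); lra).
  assert (0 <= k * S <= S) by (split; nra).
  assert (0 <= A * (k * S) <= A * S) by (split; nra).
  apply Rabs_le. split; nra.
Qed.

Let coef_sum_bound : Rabs a1 + Rabs a2 + Rabs a3 <= 6 * c0 / k.
Proof.
  unfold a1, a2, a3, disp_coef1, disp_coef2, disp_coef3. fold A.
  set (B := (1 - k) ^ 2 / k). set (S := s * L) in *.
  assert (HAB : A * B = c0 / k) by (unfold A, B, c0; field; lra).
  assert (0 < A * B) by (rewrite HAB; apply Rdiv_lt_0_compat; lra).
  assert (0 < A * S) by (unfold S; apply Rmult_lt_0_compat; [lra | nra]).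
  assert (A * S <= c0 / 2).
  { apply Rmult_le_reg_r with L; [lra |].
    assert (A * S * L <= A * (4 * c0)) by (rewrite Rmult_assoc; apply Rmult_le_compat_l; lra).
    nra. }
  assert (c0 <= c0 / k) by (apply Rle_div_r with (a := c0); [lra | nra]).
  assert (Rabs (A * B * (1 - 3 * k) - A * S * (1 - 2 * k)) <= 2 * (A * B) + A * S)
    by (apply Rabs_le; split; nra).
  assert (Rabs (A * B * (3 * k - 2) + A * S * (1 - k)) <= 2 * (A * B) + A * S)
    by (apply Rabs_le; split; nra).
  assert (Rabs (A * B * (1 - k)) <= A * B) by (apply Rabs_le; split; nra).
  replace (6 * c0 / k) with (6 * (c0 / k)) by (field; lra).
  lra.
Qed.

(* The root of the leading-order relation [Cexp (- w) = - d / 2]. *)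
Let w0 : C := (ln A, PI).

Let theta (v : C) : C := (RtoC (/ L) * (w0 + v))%C.

Let rho (v : C) : C := (RtoC (/ sE) * cubic a0 a1 a2 a3 (theta v))%C.

Let theta_bound (v : C) : Cmod v <= r -> Cmod (theta v) <= T / L.
Proof.
  intros Hv. unfold theta. rewrite Cmod_mult, Cmod_R, Rabs_inv_L.
  pose proof (Cmod_triangle w0 v).
  assert (Cmod w0 <= ln A + PI).
  { eapply Rle_trans; [apply Cmod_le_Rabs_Re_Im |]. unfold w0; simpl.
    pose proof PI_RGT_0. rewrite !Rabs_right; lra. }
  unfold Rdiv. rewrite Rmult_comm. apply Rmult_le_compat_r; [left; apply Rinv_0_lt_compat; lra |].
  unfold T. lra.
Qed.

Let theta_le_1 (v : C) : Cmod v <= r -> Cmod (theta v) <= 1.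
Proof.
  intros Hv. eapply Rle_trans; [apply theta_bound, Hv |].
  apply Rdiv_le_1 with (r2 := L); lra.
Qed.

Let rho_bound (v : C) : Cmod v <= r -> 10 * Cmod (rho v) <= r.
Proof.
  intros Hv. unfold rho. rewrite Cmod_mult, Cmod_R, Rabs_inv_sE.
  pose proof (theta_bound v Hv). pose proof (cubic_bound a0 a1 a2 a3 (theta v) (theta_le_1 v Hv)).
  pose proof (Cmod_ge_0 (theta v)).
  pose proof (Rabs_pos a1); pose proof (Rabs_pos a2); pose proof (Rabs_pos a3).
  assert (Hcub : Cmod (cubic a0 a1 a2 a3 (theta v)) <= K * c0 / L).
  { eapply Rle_trans; [eassumption |].
    assert ((Rabs a1 + Rabs a2 + Rabs a3) * Cmod (theta v) <= 6 * c0 / k * (T / L))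
      by (apply Rmult_le_compat; lra).
    replace (K * c0 / L) with ((8 * A + 8) * c0 / L + 6 * c0 / k * (T / L))
      by (unfold K; field; lra).
    lra. }
  assert (Hinv : / sE <= / c0) by (apply Rinv_le_contravar; lra).
  apply Rle_trans with (10 * (/ c0 * (K * c0 / L))).
  - apply Rmult_le_compat_l; [lra |].
    apply Rmult_le_compat; [left; apply Rinv_0_lt_compat; lra | apply Cmod_ge_0 | lra | lra].
  - replace (10 * (/ c0 * (K * c0 / L))) with (10 * K / L) by (field; lra).
    apply Rle_div_l; lra.
Qed.

Let rho_lipschitz (v1 v2 : C) : Cmod v1 <= r -> Cmod v2 <= r ->
  10 * Cmod (rho v1 - rho v2) <= / 2 * Cmod (v1 - v2).
Proof.
  intros H1 H2. unfold rho.
  replace (RtoC (/ sE) * cubic a0 a1 a2 a3 (theta v1)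
           - RtoC (/ sE) * cubic a0 a1 a2 a3 (theta v2))%C
    with (RtoC (/ sE) * (cubic a0 a1 a2 a3 (theta v1) - cubic a0 a1 a2 a3 (theta v2)))%C by ring.
  rewrite Cmod_mult, Cmod_R, Rabs_inv_sE.
  pose proof (cubic_lipschitz a0 a1 a2 a3 _ _ (theta_le_1 v1 H1) (theta_le_1 v2 H2)) as Hlip.
  replace (theta v1 - theta v2)%C with (RtoC (/ L) * (v1 - v2))%C in Hlip by (unfold theta; ring).
  rewrite Cmod_mult, Cmod_R, Rabs_inv_L in Hlip.
  set (e := Cmod (v1 - v2)) in *. assert (0 <= e) by apply Cmod_ge_0.
  set (D := Cmod (cubic a0 a1 a2 a3 (theta v1) - cubic a0 a1 a2 a3 (theta v2))) in *.
  assert (0 <= D) by apply Cmod_ge_0.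
  assert (HD : D <= 18 * c0 / k * (/ L * e)).
  { eapply Rle_trans; [exact Hlip |]. apply Rmult_le_compat_r; [| lra].
    apply Rmult_le_pos; [left; apply Rinv_0_lt_compat |]; lra. }
  assert (Hinv : / sE <= / c0) by (apply Rinv_le_contravar; lra).
  assert (Hk : 18 / (k * L) <= / 20) by (apply Rle_div_l; [nra | lra]).
  apply Rle_trans with (10 * (/ c0 * (18 * c0 / k * (/ L * e)))).
  - apply Rmult_le_compat_l; [lra |].
    apply Rmult_le_compat; [left; apply Rinv_0_lt_compat; lra | lra | lra | lra].
  - replace (10 * (/ c0 * (18 * c0 / k * (/ L * e)))) with (10 * (18 / (k * L)) * e)
      by (field; lra).
    nra.
Qed.

Let one_plus_rho_near_1 (v : C) : Cmod v <= r -> Cmod (1 + rho v - 1) <= 1 / 2.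
Proof.
  intros Hv. replace (1 + rho v - 1)%C with (rho v) by ring.
  pose proof (rho_bound v Hv). pose proof r_range. lra.
Qed.

(* A fixed point [v] of [F] solves [Cexp (- v) = 1 + rho v]. *)
Let F (v : C) : C := (- Clog (1 + rho v))%C.

Let F_maps_disk (v : C) : Cmod v <= r -> Cmod (F v) <= r.
Proof.
  intros Hv. unfold F. rewrite Cmod_opp.
  replace (Clog (1 + rho v)) with (Clog (1 + rho v) - Clog 1)%C by (rewrite Clog_1; ring).
  assert (H11 : Cmod (1 - 1) <= 1 / 2)
    by (replace (1 - 1)%C with (RtoC 0) by ring; rewrite Cmod_0; lra).
  eapply Rle_trans; [apply Clog_lipschitz; [apply one_plus_rho_near_1, Hv | exact H11] |].
  replace (1 + rho v - 1)%C with (rho v) by ring. apply rho_bound, Hv.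
Qed.

Let F_contraction (v1 v2 : C) : Cmod v1 <= r -> Cmod v2 <= r ->
  Cmod (F v1 - F v2) <= / 2 * Cmod (v1 - v2).
Proof.
  intros H1 H2. unfold F.
  replace (- Clog (1 + rho v1) - - Clog (1 + rho v2))%C
    with (- (Clog (1 + rho v1) - Clog (1 + rho v2)))%C by ring.
  rewrite Cmod_opp.
  eapply Rle_trans; [apply Clog_lipschitz; apply one_plus_rho_near_1; assumption |].
  replace (1 + rho v1 - (1 + rho v2))%C with (rho v1 - rho v2)%C by ring.
  apply rho_lipschitz; assumption.
Qed.

Let fixpoint_solves (v : C) : Cmod v <= r -> F v = v ->
  (Cexp (- (w0 + v)) * RtoC sE)%C = scaled_dispersion k s L (RtoC (/ L) * (w0 + v))%C.
Proof.
  intros Hv Hfix.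
  destruct (disc_1_half_bounds _ (one_plus_rho_near_1 v Hv)) as [[Hpos _] _].
  assert (Hexp_v : Cexp (- v) = (1 + rho v)%C).
  { rewrite <- Hfix at 1. unfold F.
    replace (- - Clog (1 + rho v))%C with (Clog (1 + rho v)) by ring.
    apply Cexp_Clog. lra. }
  replace (- (w0 + v))%C with (- w0 + - v)%C by ring.
  rewrite Cexp_add, Hexp_v. unfold w0, A. rewrite (Cexp_neg_ln_PI d) by lra. fold A.
  rewrite (scaled_dispersion_cubic k d) by lra.
  change (cubic (disp_coef0 k d s L) (disp_coef1 k d s L) (disp_coef2 k d s L) (disp_coef3 k d)
    (RtoC (/ L) * ((ln A, PI) + v))) with (cubic a0 a1 a2 a3 (theta v)).
  fold c0 sE. unfold rho.
  destruct (cubic a0 a1 a2 a3 (theta v)) as [x y].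
  assert (0 < sE) by lra.
  apply C_ext; simpl; field; lra.
Qed.

Lemma scaled_dispersion_root_near_w0 :
  exists w : C, 0 < Re w < L /\
    (Cexp (- w) * RtoC (s + k * (s * L) + 2 * (1 - k) ^ 2 / d))%C
    = scaled_dispersion k s L (RtoC (/ L) * w)%C.
Proof.
  destruct r_range as [r_pos [r_le_1 r_le_lnA]].
  destruct (contraction_fixpoint F r (/ 2) ltac:(lra) ltac:(lra) F_maps_disk F_contraction)
    as [v [Hv Hfix]].
  exists (w0 + v)%C. split; [| exact (fixpoint_solves v Hv Hfix)].
  pose proof (re_le_Cmod v) as Hre. apply Rabs_le_between in Hre.
  change (Re (w0 + v)%C) with (ln A + Re v). pose proof PI_RGT_0.
  unfold T in L_ge_T. lra.
Qed.

End Dispersion_root.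

Lemma scaled_dispersion_root (k d : R) : 0 < k < 1 -> 0 < d < 2 ->
  exists L1, 0 < L1 /\ forall s L, 0 < s -> L1 <= L -> s * L * L <= 4 * (2 * (1 - k) ^ 2 / d) ->
    exists w : C, 0 < Re w < L /\
      (Cexp (- w) * RtoC (s + k * (s * L) + 2 * (1 - k) ^ 2 / d))%C
      = scaled_dispersion k s L (RtoC (/ L) * w)%C.
Proof.
  intros Hk Hd.
  set (A := 2 / d). set (T := ln A + PI + 1). set (r := Rmin 1 (ln A / 2)).
  set (K := 8 * A + 8 + 6 * T / k).
  assert (HlnA : 0 < ln A)
    by (rewrite <- ln_1; apply ln_increasing; unfold A; [lra | apply Rlt_div_r; lra]).
  assert (Hr : 0 < r) by (apply Rmin_glb_lt; lra).
  assert (HT : 0 < T) by (pose proof PI_RGT_0; unfold T; lra).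
  set (L1 := Rmax (Rmax (8 * A) T) (Rmax (10 * K / r) (360 / k))).
  assert (H8A : 8 * A <= L1) by (eapply Rle_trans; apply Rmax_l).
  assert (HTL : T <= L1) by (eapply Rle_trans; [apply Rmax_r | apply Rmax_l]).
  assert (HKL : 10 * K / r <= L1) by (eapply Rle_trans; [apply Rmax_l | apply Rmax_r]).
  assert (HkL : 360 / k <= L1) by (eapply Rle_trans; apply Rmax_r).
  exists L1. split; [lra |]. intros s L Hs HL HsLL.
  apply (scaled_dispersion_root_near_w0 k d s L Hk Hd Hs HsLL); fold A T r K; [lra | lra | |].
  - rewrite (Rmult_comm r L). apply (Rle_div_l (10 * K) L r Hr). lra.
  - rewrite (Rmult_comm k L). apply (Rle_div_l 360 L k); lra.
Qed.

Lemma scaled_dispersion_wave (k s L : R) (w : C) : 0 < k < 1 -> 0 < s -> 0 < L ->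
  (RtoC (/ s) * scaled_dispersion k s L (RtoC (/ L) * w))%C =
  wave_dispersion k s (k * s * L / (2 * (1 - k)))
    (RtoC (/ (2 * (k * s * L / (2 * (1 - k))))) * (w - RtoC L))%C.
Proof.
  intros Hk Hs HL. unfold scaled_dispersion, wave_dispersion. destruct w.
  apply C_ext; simpl; field; repeat split; lra.
Qed.

(** * Small relaxation time *)

Lemma width_eq_exp (k Om d tau W : R) : 0 < k -> 0 < tau -> Om <> 0 -> 0 < d ->
  width_eq k Om d tau W ->
  exp ((1 - k) / (k * (tau * Rabs Om)) * (2 * W))
  = 1 + k * ((1 - k) / (k * (tau * Rabs Om)) * (2 * W)) + 2 * (1 - k) ^ 2 / d / (tau * Rabs Om).
Proof.
  unfold width_eq. intros Hk Htau HOm Hd Hw. pose proof (Rabs_pos_lt Om HOm).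
  replace (k * tau * Rabs Om) with (k * (tau * Rabs Om)) in Hw by ring.
  match goal with |- exp ?x = _ => transitivity (exp x - 1 + 1); [ring |] end.
  rewrite <- Hw. field. repeat split; lra.
Qed.

Lemma exp_balance_quadratic (k c s L : R) : 0 <= k <= 1 -> 0 < s -> 0 <= L ->
  exp L = 1 + k * L + c / s -> s * L * L <= 4 * c.
Proof.
  intros Hk Hs HL HE.
  assert (Hhalf : 1 + L + L * L / 4 <= exp L).
  { replace (exp L) with (exp (L / 2) * exp (L / 2)) by (rewrite <- exp_plus; f_equal; field).
    pose proof (exp_ineq1_le (L / 2)). nra. }
  assert (Hq : L * L / 4 <= c / s) by nra.
  apply Rmult_le_compat_l with (r := s) in Hq; [| lra].
  replace (s * (c / s)) with c in Hq by (field; lra). lra.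
Qed.

Lemma exp_balance_large (k c s L L1 : R) : 0 <= k -> 0 < s -> 0 <= L ->
  s < c * exp (- L1) -> exp L = 1 + k * L + c / s -> L1 <= L.
Proof.
  intros Hk Hs HL Hsmall HE.
  destruct (Rle_lt_dec L1 L) as [| Hlt]; [assumption | exfalso].
  assert (Hc : exp L1 * s < c).
  { replace c with (c * exp (- L1) * exp L1)
      by (rewrite Rmult_assoc, <- exp_plus, Rplus_opp_l, exp_0; ring).
    rewrite Rmult_comm. apply Rmult_lt_compat_r; [apply exp_pos | exact Hsmall]. }
  apply (Rlt_div_r (exp L1) c s) in Hc; [| lra].
  pose proof (exp_increasing _ _ Hlt). pose proof (Rmult_le_pos _ _ Hk HL). lra.
Qed.

Lemma wave_dispersion_root (k d : R) : 0 < k < 1 -> 0 < d < 2 ->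
  exists s0, 0 < s0 /\ forall tau Om W, 0 < tau -> 0 < Om -> tau * Om < s0 -> 0 < W ->
    width_eq k Om d tau W ->
    exists b : C, - (1 - k) / (k * (tau * Om)) < Re b < 0 /\
      Cexp (b * RtoC (- W - W)) = wave_dispersion k (tau * Om) W b.
Proof.
  intros Hk Hd.
  destruct (scaled_dispersion_root k d Hk Hd) as [L1 [HL1 Hroot]].
  set (c0 := 2 * (1 - k) ^ 2 / d) in *.
  assert (Hc0 : 0 < c0)
    by (apply Rdiv_lt_0_compat; [apply Rmult_lt_0_compat; [| apply pow_lt] |]; lra).
  exists (c0 * exp (- L1)). split; [apply Rmult_lt_0_compat; [exact Hc0 | apply exp_pos] |].
  intros tau Om W Htau HOm Hsmall HW Hwidth.
  set (s := tau * Om) in *. set (L := (1 - k) / (k * s) * (2 * W)).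
  assert (Hs : 0 < s) by (unfold s; nra).
  assert (HL : 0 < L) by (apply Rmult_lt_0_compat; [apply Rdiv_lt_0_compat; nra | lra]).
  assert (Hbal : exp L = 1 + k * L + c0 / s).
  { pose proof (width_eq_exp k Om d tau W ltac:(lra) Htau ltac:(lra) ltac:(lra) Hwidth) as H.
    rewrite Rabs_right in H by lra. exact H. }
  destruct (Hroot s L Hs (exp_balance_large k c0 s L L1 ltac:(lra) Hs ltac:(lra) Hsmall Hbal)
              (exp_balance_quadratic k c0 s L ltac:(lra) Hs ltac:(lra) Hbal)) as [w [Hw Hweq]].
  assert (HW_L : W = k * s * L / (2 * (1 - k))) by (unfold L; field; lra).
  exists (RtoC (/ (2 * W)) * (w - RtoC L))%C. split.
  - rewrite re_scal_l. change (Re (w - RtoC L)%C) with (Re w - L).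
    replace (- (1 - k) / (k * s)) with (/ (2 * W) * (0 - L)) by (unfold L; field; nra).
    assert (0 < / (2 * W)) by (apply Rinv_0_lt_compat; lra). split; nra.
  - pose proof (scaled_dispersion_wave k s L w Hk Hs HL) as Htr. rewrite <- HW_L in Htr.
    rewrite <- Htr, <- Hweq.
    replace (RtoC (/ (2 * W)) * (w - RtoC L) * RtoC (- W - W))%C with (RtoC L + - w)%C
      by (destruct w; apply C_ext; simpl; field; lra).
    rewrite Cexp_add, Cexp_R, Hbal.
    destruct (Cexp (- w)). apply C_ext; simpl; field; lra.
Qed.

Lemma unstable_wave_eigenpair (k d : R) : 0 < k < 1 -> 0 < d < 2 ->
  exists s0, 0 < s0 /\ forall tau Om W, 0 < tau -> 0 < Om -> tau * Om < s0 -> 0 < W ->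
    width_eq k Om d tau W ->
    exists (lam : C) (Z : R -> C), 0 < Re lam /\ eigenfunction k Om tau W lam Z /\ bounded_fun Z.
Proof.
  intros Hk Hd. destruct (wave_dispersion_root k d Hk Hd) as [s0 [Hs0 Hroot]].
  exists s0. split; [exact Hs0 |]. intros tau Om W Htau HOm Hs HW Hwidth.
  destruct (Hroot tau Om W Htau HOm Hs HW Hwidth) as [b [Hb Hdisp]].
  exists (wave_eigenvalue k tau (tau * Om) b), (wave_eigenfunction k (tau * Om) W b).
  split; [apply Re_wave_eigenvalue_pos; try nra; apply Hb |].
  now apply wave_eigenpair.
Qed.

Theorem corollary2p4 (kappa Omega delta : R) :
  0 < kappa < 1 -> Omega <> 0 -> 0 < delta < 2 ->
  exists tau0 : R, 0 < tau0 /\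
    forall tau W : R, 0 < tau < tau0 -> 0 < W ->
      width_eq kappa Omega delta tau W ->
      exists (lam : C) (Z : R -> C),
        0 < Re lam /\ eigenfunction kappa Omega tau W lam Z /\ bounded_fun Z.
Proof.
  intros Hk HOm Hd.
  destruct (unstable_wave_eigenpair kappa delta Hk Hd) as [s0 [Hs0 Hunstable]].
  pose proof (Rabs_pos_lt Omega HOm) as Habs.
  exists (s0 / Rabs Omega). split; [now apply Rdiv_lt_0_compat |].
  intros tau W [Htau Htau0] HW Hwidth.
  apply (Rlt_div_r tau s0 (Rabs Omega) Habs) in Htau0.
  destruct (Rle_lt_dec 0 Omega) as [Hpos | Hneg].
  - rewrite Rabs_right in Htau0 by lra. apply Hunstable; lra || assumption.
  - rewrite Rabs_left in Htau0 by lra.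
    assert (Hwidth' : width_eq kappa (- Omega) delta tau W)
      by (unfold width_eq in *; now rewrite Rabs_Ropp).
    destruct (Hunstable tau (- Omega) W Htau ltac:(lra) Htau0 HW Hwidth')
      as (lam & Z & Hlam & HZ & Hbounded).
    destruct (eigenfunction_reflect _ _ _ _ _ _ HZ Hbounded) as [HZ' Hbounded'].
    rewrite Ropp_involutive in HZ'. eauto.
Qed.
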